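(* Let $\mathcal{X}$ be a set, let $k$ be a strong kernel on $\mathcal{X}$, and let $n\in\mathbb{N}$. Then the optimal assignment kernel $K^k_{\mathfrak{B}}$ on the set $[\mathcal{X}]^n$ of all $n$-element subsets of $\mathcal{X}$ is a valid kernel, i.e. it is symmetric and for every finite collection $X_1,\dots,X_m\in[\mathcal{X}]^n$ the matrix $\big(K^k_{\mathfrak{B}}(X_i,X_j)\big)_{i,j=1}^m$ is positive semidefinite.
   Context: A strong kernel on a set $\mathcal{X}$ is a symmetric function $k:\mathcal{X}\times\mathcal{X}\to\mathbb{R}_{\ge 0}$ such that $k(x,y)\ge\min\{k(x,z),k(z,y)\}$ for all $x,y,z\in\mathcal{X}$. For $X,Y\in[\mathcal{X}]^n$, $\mathfrak{B}(X,Y)$ is the set of all bijections between $X$ and $Y$ (viewed as sets of pairs $(x,y)$), and the optimal assignment kernel is $K^k_{\mathfrak{B}}(X,Y)=\max_{B\in\mathfrak{B}(X,Y)}\sum_{(x,y)\in B}k(x,y)$. *)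

From HB Require Import structures.
From mathcomp Require Import all_boot all_order all_algebra all_fingroup.
Set Implicit Arguments. Unset Strict Implicit. Unset Printing Implicit Defensive.
Import Order.TTheory GRing.Theory Num.Theory.
Local Open Scope ring_scope.

Definition strong_kernel (R : realFieldType) (T : Type) (k : T -> T -> R) : Prop :=
  [/\ (forall x y, k x y = k y x),
      (forall x y, 0 <= k x y) &
      (forall x y z, Num.min (k x z) (k z y) <= k x y)].

(* An n-element subset of T is represented by an injective enumeration
   'I_n -> T.  Bijections between X = {x i} and Y = {y j} correspond
   exactly to permutations s of 'I_n via x i |-> y (s i). *)
Definition nsubset (T : Type) (n : nat) (x : 'I_n -> T) : Prop := injective x.

(* Optimal assignment kernel: maximum over all bijections of the total weight.
   Since k >= 0, every sum is >= 0 and 'S_n is nonempty, so folding Num.max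
   from 0 gives exactly the maximum. *)
Definition oa_kernel (R : realFieldType) (T : Type) (k : T -> T -> R) (n : nat)
    (x y : 'I_n -> T) : R :=
  \big[Num.max/0]_(s : 'S_n) \sum_(i < n) k (x i) (y (s i)).

From HB Require Import structures.
From mathcomp Require Import all_boot all_order all_algebra all_fingroup zify.
Import Order.TTheory GRing.Theory Num.Theory.
Local Open Scope ring_scope.
Set Implicit Arguments. Unset Strict Implicit. Unset Printing Implicit Defensive.

(* For every threshold t, the relation t <= k x y of a strong kernel is an
   equivalence on {x | t <= k x x}, and the classes for growing t form a
   hierarchy.  Counting, for each class C at level t, the matches of an
   assignment that stay inside C gives at most min(|X \cap C|, |Y \cap C|)
   matches; a single bijection attains this bound at all levels at once,
   since a deficient assignment can always be improved by a swap that loses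
   nothing at higher levels.  Writing k as a nonnegative combination of its
   level indicators, the optimal assignment kernel becomes a nonnegative
   combination of the histogram intersection kernels
   (X, Y) |-> sum_C min(|X \cap C|, |Y \cap C|), each of which is positive
   semidefinite because min a b = sum_r [r < a][r < b]. *)

Lemma exists_ltr_of_sum (R : realDomainType) (I : finType) (f g : I -> R) :
  \sum_(i : I) f i < \sum_(i : I) g i -> exists i, f i < g i.
Proof.
move=> lt_fg; apply/existsP; apply: contraTT lt_fg => /existsPn ge_fg.
by rewrite -leNgt; apply: ler_sum => i _; rewrite leNgt ge_fg.
Qed.

Lemma exists_ltn_of_sum (I : finType) (f g : I -> nat) :
  (\sum_(i : I) f i < \sum_(i : I) g i)%N -> exists i, (f i < g i)%N.
Proof.
by rewrite -(ltr_nat int) !natr_sum => /exists_ltr_of_sum [i]; rewrite ltr_nat; exists i.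
Qed.

Lemma ltn_bool (b c : bool) : (b < c)%N = ~~ b && c.
Proof. by case: b; case: c. Qed.

Lemma sum_ltn_ord N c : (\sum_(r < N) (r < c)%N)%N = minn N c.
Proof.
elim: N => [|N IH]; first by rewrite big_ord0 min0n.
by rewrite big_ord_recr /= IH; case: (ltnP N c) => /=; lia.
Qed.

Lemma minn_sum_ord N a b : (a <= N)%N ->
  minn a b = (\sum_(r < N) ((r < a) && (r < b))%N)%N.
Proof.
by move=> le_aN; under eq_bigr do rewrite -leq_min; rewrite sum_ltn_ord; lia.
Qed.

Section Layers.
Variable R : realDomainType.

Fixpoint layers (p : R) (s : seq R) : seq (R * R) :=
  if s is t :: s' then (t - p, t) :: layers t s' else [::].

Lemma mem_layers (s : seq R) p q : q \in layers p s -> q.2 \in s.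
Proof.
elim: s p => [|t s IH] p //=; rewrite in_cons => /predU1P [-> /=|/IH q_s].
  exact: mem_head.
by rewrite in_cons q_s orbT.
Qed.

Lemma layers_ge0 (s : seq R) p q : path <=%R p s -> q \in layers p s -> 0 <= q.1.
Proof.
elim: s p => [|t s IH] p //= /andP [le_pt s_path].
by rewrite in_cons => /predU1P [-> /=|/(IH _ s_path)]; rewrite ?subr_ge0.
Qed.

Lemma sum_layers_gt (s : seq R) p v : {in s, forall u, v < u} ->
  \sum_(q <- layers p s) q.1 * (q.2 <= v)%R%:R = 0.
Proof.
elim: s p => [|t s IH] p /= gt_s; first by rewrite big_nil.
rewrite big_cons /= leNgt gt_s ?mem_head // mulr0 add0r IH // => u u_s.
by rewrite gt_s // in_cons u_s orbT.
Qed.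

Lemma sum_layers (s : seq R) p v : path <=%R p s -> p <= v -> v \in s ->
  \sum_(q <- layers p s) q.1 * (q.2 <= v)%R%:R = v - p.
Proof.
elim: s p => [|t s IH] p //= /andP [le_pt s_path] le_pv.
rewrite in_cons big_cons /=.
have t_min : {in s, forall u, t <= u}.
  by apply/allP; exact: order_path_min le_trans s_path.
have [v_s _|v_s] := boolP (v \in s).
  by rewrite t_min // mulr1 IH ?t_min // addrC subrKA.
rewrite orbF => /eqP vt; subst v.
rewrite lexx mulr1 sum_layers_gt ?addr0 // => u u_s.
by rewrite lt_neqAle t_min // andbT; apply: contraNneq v_s => ->.
Qed.

End Layers.

Section PositiveSemidefinite.
Variable R : realDomainType.

Definition psd m (K : 'I_m -> 'I_m -> R) :=
  forall c : 'I_m -> R, 0 <= \sum_(i < m) \sum_(j < m) c i * c j * K i j.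

Lemma eq_psd m (K K' : 'I_m -> 'I_m -> R) :
  (forall i j, K i j = K' i j) -> psd K' -> psd K.
Proof.
by move=> eqK psdK' c; under eq_bigr do under eq_bigr do rewrite eqK.
Qed.

Lemma psd_sum m (J : eqType) (r : seq J) (F : J -> 'I_m -> 'I_m -> R) :
  {in r, forall x, psd (F x)} -> psd (fun i j => \sum_(x <- r) F x i j).
Proof.
move=> psdF c /=.
under eq_bigr do under eq_bigr do rewrite mulr_sumr.
under eq_bigr do rewrite exchange_big.
by rewrite exchange_big big_seq; apply: sumr_ge0 => x /psdF.
Qed.

Lemma psd_scale m (w : R) (K : 'I_m -> 'I_m -> R) :
  0 <= w -> psd K -> psd (fun i j => w * K i j).
Proof.
move=> w_ge0 psdK c /=.
under eq_bigr do under eq_bigr do rewrite mulrCA.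
by under eq_bigr do rewrite -mulr_sumr; rewrite -mulr_sumr mulr_ge0.
Qed.

Lemma psd_rank1 m (f : 'I_m -> R) : psd (fun i j => f i * f j).
Proof.
move=> c /=; under eq_bigr do under eq_bigr do rewrite mulrACA.
by under eq_bigr do rewrite -mulr_sumr; rewrite -mulr_suml -expr2 sqr_ge0.
Qed.

End PositiveSemidefinite.

Section StrongKernel.
Variables (R : realFieldType) (T : Type) (k : T -> T -> R).
Hypothesis k_strong : strong_kernel k.

Lemma strong_kernelC x y : k x y = k y x.
Proof. by case: k_strong. Qed.

Lemma strong_kernel_ge0 x y : 0 <= k x y.
Proof. by case: k_strong. Qed.

Lemma le_kernel_trans t x y z : t <= k x z -> t <= k z y -> t <= k x y.
Proof.
case: k_strong => _ _ k_min le_xz le_zy.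
by apply: le_trans (k_min x y z); rewrite le_min le_xz le_zy.
Qed.

Lemma oa_kernel_le n (x y : 'I_n -> T) : oa_kernel k x y <= oa_kernel k y x.
Proof.
apply: bigmax_le => [|s _].
  by apply: le_trans (le_bigmax _ _ 1%g); apply: sumr_ge0 => i _; apply: strong_kernel_ge0.
apply: le_trans (le_bigmax _ _ s^-1%g).
rewrite (reindex_inj (@perm_inj _ s^-1%g)) le_eqVlt; apply/predU1P; left.
by apply: eq_bigr => j _; rewrite /= permKV strong_kernelC.
Qed.

Lemma oa_kernelC n (x y : 'I_n -> T) : oa_kernel k x y = oa_kernel k y x.
Proof. by apply/eqP; rewrite eq_le !oa_kernel_le. Qed.

(* [P] enumerates a finite set of points, with repetitions allowed,
   containing all the points of the n-element sets under consideration. *)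
Variables (n : nat) (I : finType) (P : I -> T).

Definition covered (X : 'I_n -> T) := forall a, exists u, X a = P u.

Definition level_count t (X : 'I_n -> T) z : nat :=
  (\sum_(a < n) (t <= k (X a) z)%R)%N.

Definition class_size t u : nat := (\sum_(v : I) (t <= k (P u) (P v))%R)%N.

(* Every point u of the t-class C contributes [1 / |C|] times the common
   value min(|X \cap C|, |Y \cap C|), so each class is counted once. *)
Definition level_overlap t (X Y : 'I_n -> T) : R :=
  \sum_(u : I)
    (minn (level_count t X (P u)) (level_count t Y (P u)))%:R / (class_size t u)%:R.

Definition level_matched t (X Y : 'I_n -> T) (s : 'S_n) : nat :=
  (\sum_(a < n) (t <= k (X a) (Y (s a)))%R)%N.

Definition class_matched t (X Y : 'I_n -> T) (s : 'S_n) u : nat :=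
  (\sum_(a < n) ((t <= k (P u) (X a)) && (t <= k (X a) (Y (s a))))%R)%N.

Lemma level_count_le t X z : (level_count t X z <= n)%N.
Proof.
apply: leq_trans (_ : \sum_(a < n) 1 <= n)%N; last by rewrite sum1_card card_ord.
by apply: leq_sum => a _; case: (_ <= _).
Qed.

Lemma level_overlap_ge0 t X Y : 0 <= level_overlap t X Y.
Proof. by apply: sumr_ge0 => u _; rewrite divr_ge0 ?ler0n. Qed.

Lemma level_matched_class_sum t X Y s : covered X ->
  (level_matched t X Y s)%:R =
    \sum_(u : I) (class_matched t X Y s u)%:R / (class_size t u)%:R :> R.
Proof.
move=> Xcov; rewrite natr_sum.
under [RHS]eq_bigr do rewrite natr_sum mulr_suml.
rewrite exchange_big /=; apply: eq_bigr => a _.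
have [matched|_] := boolP (t <= k (X a) (Y (s a))); last first.
  by rewrite big1 // => u _; rewrite andbF mul0r.
under eq_bigr do rewrite andbT.
pose size_a := (\sum_(v : I) (t <= k (P v) (X a))%R)%N.
have class_sizeE u : t <= k (P u) (X a) -> class_size t u = size_a.
  move=> le_ua; apply: eq_bigr => v _; congr nat_of_bool; apply/idP/idP => [le_uv|le_va].
    by apply: le_kernel_trans le_ua; rewrite strong_kernelC.
  by apply: le_kernel_trans le_ua _; rewrite strong_kernelC.
transitivity (\sum_(u : I) (t <= k (P u) (X a))%R%:R / size_a%:R : R); last first.
  apply: eq_bigr => u _; have [/class_sizeE -> //|_] := boolP (t <= k (P u) (X a)).
  by rewrite /= !mul0r.
rewrite -mulr_suml -natr_sum divff // pnatr_eq0 -lt0n.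
have [u0 Xa] := Xcov a; rewrite /size_a (bigD1 u0) //= -Xa addn_gt0 lt0b.
apply/orP; left.
by apply: (le_kernel_trans matched); rewrite strong_kernelC.
Qed.

Lemma class_matchedE t X Y s u : class_matched t X Y s u =
  (\sum_(b < n) ((t <= k (P u) (X ((s^-1)%g b))) && (t <= k (P u) (Y b)))%R)%N.
Proof.
rewrite /class_matched (reindex_inj (@perm_inj _ s^-1%g)) /=.
apply: eq_bigr => b _; rewrite permKV; congr nat_of_bool.
have [le_ux|//] := boolP (t <= k (P u) (X ((s^-1)%g b))); apply/idP/idP => [le_xy|le_uy].
  exact: le_kernel_trans le_ux le_xy.
by apply: le_kernel_trans le_uy; rewrite strong_kernelC.
Qed.

Lemma class_matched_le_min t X Y s u :
  (class_matched t X Y s u <= minn (level_count t X (P u)) (level_count t Y (P u)))%N.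
Proof.
rewrite leq_min; apply/andP; split; last rewrite class_matchedE.
  apply: leq_sum => a _; rewrite [k (P u) _]strong_kernelC.
  by case: (t <= k (X a) (P u))%R; rewrite ?leq_b1.
apply: leq_sum => b _; rewrite [k (Y b) _]strong_kernelC.
by case: (t <= k (P u) (Y b))%R; rewrite ?andbT ?andbF ?leq_b1.
Qed.

Lemma level_matched_le_overlap t X Y s : covered X ->
  (level_matched t X Y s)%:R <= level_overlap t X Y.
Proof.
move=> Xcov; rewrite level_matched_class_sum //; apply: ler_sum => u _.
by rewrite ler_wpM2r ?invr_ge0 ?ler0n // ler_nat class_matched_le_min.
Qed.

Lemma exists_unmatched_pair t X Y s : covered X ->
  (level_matched t X Y s)%:R < level_overlap t X Y ->
  exists a b, [/\ ~~ (t <= k (X a) (Y (s a))), ~~ (t <= k (X ((s^-1)%g b)) (Y b))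
                & t <= k (X a) (Y b)].
Proof.
move=> Xcov; rewrite level_matched_class_sum // => /exists_ltr_of_sum [u lt_u].
have : (class_matched t X Y s u < minn (level_count t X (P u)) (level_count t Y (P u)))%N.
  rewrite ltnNge; apply: contraTN lt_u => le_u.
  by rewrite -leNgt ler_wpM2r ?invr_ge0 ?ler0n ?ler_nat.
rewrite leq_min => /andP [ltX]; rewrite class_matchedE => ltY.
have [a] := exists_ltn_of_sum ltX; rewrite ltn_bool negb_and => /andP [unmatched_a].
rewrite [k _ (P u)]strong_kernelC => le_ua.
have [b] := exists_ltn_of_sum ltY; rewrite ltn_bool negb_and => /andP [unmatched_b le_bu].
have le_ub : t <= k (P u) (Y b) by rewrite strong_kernelC.
exists a, b; split.
- by move: unmatched_a; rewrite le_ua.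
- move: unmatched_b; rewrite le_ub orbF; apply: contraNN => le_xy.
  by apply: (le_kernel_trans le_ub); rewrite strong_kernelC.
- by apply: le_kernel_trans le_ub; rewrite strong_kernelC.
Qed.

Section Swap.
Variables (t : R) (X Y : 'I_n -> T) (s : 'S_n) (a b : 'I_n).
Hypotheses (a_unmatched : ~~ (t <= k (X a) (Y (s a))))
           (b_unmatched : ~~ (t <= k (X ((s^-1)%g b)) (Y b))).

Lemma swap_keeps_match t' x : t <= t' -> t' <= k (X x) (Y (s x)) ->
  t' <= k (X x) (Y ((tperm a ((s^-1)%g b) * s)%g x)).
Proof.
move=> le_tt' matched; have le_t := le_trans le_tt' matched.
have [xa|xNa] := eqVneq x a; first by move: le_t; rewrite xa (negbTE a_unmatched).
have [xb|xNb] := eqVneq x ((s^-1)%g b).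
  by move: le_t; rewrite xb permKV (negbTE b_unmatched).
by rewrite permM tpermD // eq_sym.
Qed.

Lemma level_matched_swap_le t' : t <= t' ->
  (level_matched t' X Y s <= level_matched t' X Y (tperm a ((s^-1)%g b) * s)%g)%N.
Proof.
move=> le_tt'; apply: leq_sum => x _.
by have [/(swap_keeps_match le_tt') ->|] := boolP (t' <= k (X x) (Y (s x))).
Qed.

Lemma level_matched_swap_lt : t <= k (X a) (Y b) ->
  (level_matched t X Y s < level_matched t X Y (tperm a ((s^-1)%g b) * s)%g)%N.
Proof.
move=> le_ab; rewrite /level_matched (bigD1 a) // [X in (_ < X)%N](bigD1 a) //=.
rewrite (negbTE a_unmatched) permM tpermL permKV le_ab add0n add1n ltnS.
apply: leq_sum => x _.
by have [/(swap_keeps_match (lexx t)) ->|] := boolP (t <= k (X x) (Y (s x))).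
Qed.

End Swap.

(* Among the permutations optimal at the higher levels, one with the most
   matches at the lowest level is optimal there too: otherwise the swap of
   [exists_unmatched_pair] adds a match without losing one at higher levels. *)
Lemma exists_perm_optimal_on X Y (L : seq R) : covered X -> sorted <=%R L ->
  exists s, {in L, forall t, (level_matched t X Y s)%:R = level_overlap t X Y}.
Proof.
move=> Xcov; elim: L => [|t0 L IH] /= L_sorted; first by exists 1%g.
have [s0 opt_s0] := IH (path_sorted L_sorted).
have t0_min : {in L, forall t, t0 <= t}.
  by apply/allP; exact: order_path_min le_trans L_sorted.
pose opt_L s := all (fun t => (level_matched t X Y s)%:R == level_overlap t X Y) L.
have opt_L_s0 : opt_L s0 by apply/allP => t /opt_s0 ->.
case: (arg_maxnP (level_matched t0 X Y) opt_L_s0) => s /allP opt_s s_max.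
exists s => t; rewrite in_cons => /predU1P [{t}->|/opt_s/eqP //].
apply/eqP; rewrite eq_le level_matched_le_overlap //= leNgt.
apply/negP => /(exists_unmatched_pair Xcov) [a [b [a_unmatched b_unmatched le_ab]]].
suff /s_max : opt_L (tperm a ((s^-1)%g b) * s)%g.
  by rewrite /= leqNgt level_matched_swap_lt.
apply/allP => t t_L; rewrite eq_le level_matched_le_overlap //.
by rewrite -(eqP (opt_s t t_L)) ler_nat (level_matched_swap_le a_unmatched b_unmatched) ?t0_min.
Qed.

Lemma oa_kernel_layers X Y (s : seq R) : covered X -> path <=%R 0 s ->
  (forall a b, k (X a) (Y b) \in s) ->
  oa_kernel k X Y = \sum_(q <- layers 0 s) q.1 * level_overlap q.2 X Y.
Proof.
move=> Xcov s_path s_values.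
have weight_ge0 q : q \in layers 0 s -> 0 <= q.1 := layers_ge0 s_path.
have assignmentE (sg : 'S_n) : \sum_(i < n) k (X i) (Y (sg i)) =
    \sum_(q <- layers 0 s) q.1 * (level_matched q.2 X Y sg)%:R.
  transitivity (\sum_(i < n) \sum_(q <- layers 0 s)
                  q.1 * (q.2 <= k (X i) (Y (sg i)))%R%:R).
    by apply: eq_bigr => i _; rewrite sum_layers ?subr0 ?strong_kernel_ge0.
  by rewrite exchange_big; apply: eq_bigr => q _; rewrite natr_sum mulr_sumr.
have [so opt_so] := exists_perm_optimal_on Y Xcov (path_sorted s_path).
apply/eqP; rewrite eq_le; apply/andP; split.
  apply: bigmax_le => [|sg _].
    by rewrite big_seq; apply: sumr_ge0 => q /weight_ge0 q_ge0;
      rewrite mulr_ge0 ?level_overlap_ge0.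
  rewrite assignmentE !big_seq; apply: ler_sum => q /weight_ge0 q_ge0.
  by rewrite ler_wpM2l ?level_matched_le_overlap.
apply: le_trans (le_bigmax _ _ so); rewrite assignmentE le_eqVlt; apply/predU1P; left.
by rewrite !big_seq; apply: eq_bigr => q /mem_layers q_s; rewrite opt_so.
Qed.

Lemma level_overlap_psd m t (X : 'I_m -> 'I_n -> T) :
  psd (fun i j => level_overlap t (X i) (X j)).
Proof.
apply: (@eq_psd _ _ _ (fun i j => \sum_(u : I) \sum_(r < n) (class_size t u)%:R^-1 *
  ((r < level_count t (X i) (P u))%N%:R * (r < level_count t (X j) (P u))%N%:R))).
  move=> i j; apply: eq_bigr => u _.
  rewrite (minn_sum_ord _ (level_count_le _ _ _)) natr_sum mulr_suml.
  by apply: eq_bigr => r _; rewrite -natrM mulnb mulrC.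
apply: psd_sum => u _; apply: psd_sum => r _.
by apply: psd_scale; [rewrite invr_ge0 ler0n | exact: psd_rank1].
Qed.

End StrongKernel.

Theorem corollary1 (R : realFieldType) (T : Type) (k : T -> T -> R) (n : nat) :
  strong_kernel k ->
  (forall x y : 'I_n -> T, nsubset x -> nsubset y ->
     oa_kernel k x y = oa_kernel k y x) /\
  (forall (m : nat) (X : 'I_m -> 'I_n -> T) (c : 'I_m -> R),
     (forall i, nsubset (X i)) ->
     0 <= \sum_(i < m) \sum_(j < m) c i * c j * oa_kernel k (X i) (X j)).
Proof.
move=> k_strong; split=> [x y _ _|m X c _]; first exact: oa_kernelC.
pose P (u : 'I_m * 'I_n) := X u.1 u.2.
pose s := sort <=%R [seq k (P u) (P v) | u <- enum {: 'I_m * 'I_n}, v <- enum {: 'I_m * 'I_n}].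
have s_path : path <=%R 0 s.
  rewrite path_min_sorted; first exact/sort_sorted/le_total.
  apply/allP => t; rewrite mem_sort => /allpairsP [[u v] [_ _ ->]].
  exact: strong_kernel_ge0.
have oa_kernelE i j : oa_kernel k (X i) (X j) =
    \sum_(q <- layers 0 s) q.1 * level_overlap k P q.2 (X i) (X j).
  apply: oa_kernel_layers => // [a|a b]; first by exists (i, a).
  by rewrite mem_sort; apply/allpairsP; exists ((i, a), (j, b)); rewrite !mem_enum.
apply: (eq_psd oa_kernelE); apply: psd_sum => q q_s.
exact/psd_scale/level_overlap_psd/(layers_ge0 s_path q_s).
Qed.
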